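(* Let $d\ge2$. For all $d$-dimensional copulas $C_1,C_2$, $$D_1(C_1,C_2)\le D_\infty(C_1,C_2)\le 2\,TV(C_1,C_2).$$ In particular, convergence with respect to $TV$ implies convergence with respect to $D_1$ and with respect to $D_\infty$.
   Context: $\mathbb{I}=[0,1]$, $\lambda^k$ is $k$-dimensional Lebesgue measure ($\lambda=\lambda^1$). For a $d$-dimensional copula $C$, $\mu_C$ is its associated probability measure on $\mathbb{I}^d$ and $K_C:\mathbb{I}\times\mathcal{B}(\mathbb{I}^{d-1})\to\mathbb{I}$ is (a version of) its Markov kernel, i.e. the regular conditional distribution of $(U_1,\dots,U_{d-1})$ given $U_d=v$ for $(U_1,\dots,U_d)\sim C$. Define $D_1(C_1,C_2)=\int_{\mathbb{I}^{d-1}}\int_{\mathbb{I}}|K_{C_1}(v,[\mathbf{0},\mathbf{u}])-K_{C_2}(v,[\mathbf{0},\mathbf{u}])|\,d\lambda(v)\,d\lambda^{d-1}(\mathbf{u})$, $D_\infty(C_1,C_2)=\sup_{\mathbf{u}\in\mathbb{I}^{d-1}}\int_{\mathbb{I}}|K_{C_1}(v,[\mathbf{0},\mathbf{u}])-K_{C_2}(v,[\mathbf{0},\mathbf{u}])|\,d\lambda(v)$, $TV(C_1,C_2)=\sup_{G\in\mathcal{B}(\mathbb{I}^d)}|\mu_{C_1}(G)-\mu_{C_2}(G)|$. *)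

From HB Require Import structures.
From mathcomp Require Import all_boot all_order all_algebra.
From mathcomp Require Import all_classical all_reals all_analysis.
Set Implicit Arguments.
Unset Strict Implicit.
Unset Printing Implicit Defensive.
Import Order.TTheory GRing.Theory Num.Theory.
Import numFieldNormedType.Exports.
Local Open Scope classical_set_scope.
Local Open Scope ring_scope.

Section copula_defs.
Variable R : realType.

Definition unit_cube (d : nat) : set (d.-tuple R) :=
  [set x | forall i, 0 <= tnth x i <= 1].

Definition box0 (d : nat) (u : d.-tuple R) : set (d.-tuple R) :=
  [set x | forall i, 0 <= tnth x i <= tnth u i].

(* d-dimensional copula (as a function on I^d): grounded, uniform margins,
   d-increasing *)
Definition is_copula (d : nat) (C : d.-tuple R -> R) : Prop :=
  [/\ (forall u, unit_cube u -> (exists i, tnth u i = 0) -> C u = 0),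
      (forall u i, unit_cube u -> (forall j, j != i -> tnth u j = 1) ->
          C u = tnth u i) &
      (forall a b, unit_cube a -> unit_cube b -> (forall i, tnth a i <= tnth b i) ->
          0 <= \sum_(S : {set 'I_d})
                 (-1) ^+ #|S| *
                 C [tuple (if i \in S then tnth a i else tnth b i) | i < d])].

Definition copula_measure (d : nat) (C : d.-tuple R -> R)
    (mu : probability (d.-tuple R) R) : Prop :=
  mu (@unit_cube d) = 1%E /\ forall u, unit_cube u -> mu (box0 u) = (C u)%:E.

Definition firsts (n : nat) (x : n.+1.-tuple R) : n.-tuple R :=
  [tuple tnth x (widen_ord (leqnSn n) i) | i < n].
Definition lastc (n : nat) (x : n.+1.-tuple R) : R := tnth x ord_max.

(* K is (a version of) the Markov kernel of mu: the regular conditional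
   distribution of (U_1,...,U_n) given U_(n+1) = v, where (U_1..U_(n+1)) ~ mu
   and U_(n+1) is uniform on [0,1] *)
Definition markov_kernel_of (n : nat) (mu : probability (n.+1.-tuple R) R)
    (K : R.-pker R ~> n.-tuple R) : Prop :=
  forall (A : set R) (B : set (n.-tuple R)), measurable A -> measurable B ->
    (\int[lebesgue_measure]_(v in A `&` `[0%R, 1%R]) K v B)%E =
    mu [set x | B (firsts x) /\ A (lastc x)].

(* integral over I^n with respect to lambda^n, written as an iterated integral *)
Fixpoint int_cube (n : nat) : (n.-tuple R -> \bar R) -> \bar R :=
  match n return (n.-tuple R -> \bar R) -> \bar R with
  | 0 => fun f => f [tuple]
  | m.+1 => fun f =>
      (\int[lebesgue_measure]_(x in `[0%R, 1%R]) int_cube (fun t => f (cons_tuple x t)))%E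
  end.

Definition kdist (n : nat) (K1 K2 : R.-pker R ~> n.-tuple R) (u : n.-tuple R)
  : \bar R :=
  (\int[lebesgue_measure]_(v in `[0%R, 1%R]) `|K1 v (box0 u) - K2 v (box0 u)|)%E.

Definition D1 (n : nat) (K1 K2 : R.-pker R ~> n.-tuple R) : \bar R :=
  int_cube (kdist K1 K2).

Definition Dinf (n : nat) (K1 K2 : R.-pker R ~> n.-tuple R) : \bar R :=
  ereal_sup [set kdist K1 K2 u | u in @unit_cube n].

Definition TV (d : nat) (mu1 mu2 : probability (d.-tuple R) R) : \bar R :=
  ereal_sup [set `|mu1 G - mu2 G|%E | G in [set G | measurable G]].

End copula_defs.

From HB Require Import structures.
From mathcomp Require Import all_boot all_order all_algebra.
From mathcomp Require Import all_classical all_reals all_analysis.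
From mathcomp Require Import measurable_realfun.
Set Implicit Arguments.
Unset Strict Implicit.
Unset Printing Implicit Defensive.
Import Order.TTheory GRing.Theory Num.Theory.
Import numFieldNormedType.Exports.
Local Open Scope classical_set_scope.
Local Open Scope ring_scope.

(* Fix a box B = [0, u].  By the disintegration property, integrating
   K1(v, B) - K2(v, B) over A `&` [0, 1] gives mu1(B x A) - mu2(B x A).  Taking
   for A the set P where K1(., B) >= K2(., B) and then its complement splits the
   L1 distance of the kernels at u into (mu1 - mu2)(B x P) + (mu2 - mu1)(B x ~P),
   each term at most TV; hence Dinf <= 2 TV.  D1 averages this distance over the
   unit cube, which has volume 1, so it is at most its supremum Dinf. *)

Local Open Scope ereal_scope.

(* The slices integrated by [int_cube] are not known to be measurable. *)
Lemma ge0_le_integral_nonmeasurable d (T : measurableType d) (R : realType)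
    (mu : {measure set T -> \bar R}) (D : set T) (f g : T -> \bar R) :
  (forall x, D x -> 0 <= f x) -> (forall x, D x -> f x <= g x) ->
  \int[mu]_(x in D) f x <= \int[mu]_(x in D) g x.
Proof.
move=> f0 fg.
have g0 x : D x -> 0 <= g x by move=> Dx; exact: le_trans (f0 _ Dx) (fg _ Dx).
rewrite (ge0_integralE _ f0) (ge0_integralE _ g0).
apply: ereal_sup_le => _ [h /= hf <-]; exists h => //= x.
apply: le_trans (hf x) _; rewrite /patch; case: ifP => // /[!inE] Dx; exact: fg.
Qed.

Lemma pker_le1 d d' (X : measurableType d) (Y : measurableType d')
    (R : realType) (K : R.-pker X ~> Y) x (B : set Y) :
  measurable B -> K x B <= 1.
Proof. by move=> mB; rewrite -(prob_kernel (s:=K) x); apply: le_measure; rewrite ?inE. Qed.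

Lemma pker_fin_num d d' (X : measurableType d) (Y : measurableType d')
    (R : realType) (K : R.-pker X ~> Y) x (B : set Y) :
  measurable B -> K x B \is a fin_num.
Proof.
by move=> mB; rewrite ge0_fin_numE ?measure_ge0// (le_lt_trans (pker_le1 _ _ mB)) ?ltry.
Qed.

Lemma fin_num_distrC (R : realType) (a b : \bar R) :
  b \is a fin_num -> `|a - b| = `|b - a|.
Proof. by move=> fb; rewrite -abseN oppeB ?fin_num_adde_defl ?fin_numN// addeC. Qed.

Lemma integral_abse_sub_split d (T : measurableType d) (R : realType)
    (mu : {measure set T -> \bar R}) (D : set T) (f g : T -> \bar R) :
  measurable D -> measurable_fun D f -> measurable_fun D g ->
  (forall x, f x \is a fin_num) -> (forall x, g x \is a fin_num) ->
  \int[mu]_(x in D) `|f x - g x| =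
    \int[mu]_(x in [set x | g x <= f x] `&` D) (f x - g x) +
    \int[mu]_(x in ~` [set x | g x <= f x] `&` D) (g x - f x).
Proof.
move=> mD mf mg ff fg; set P := [set x | g x <= f x].
have mPD : measurable (P `&` D) by rewrite setIC; exact: measurable_lee.
have mPcD : measurable (~` P `&` D).
  have -> : ~` P `&` D = D `\` (P `&` D) by apply/seteqP; split=> x /=; tauto.
  exact: measurableD.
rewrite -[in LHS](setIT D) -(setUv P) setIUr setIC [D `&` _]setIC.
rewrite integral_setU//; last 2 first.
- rewrite -setIUl setUv setTI; apply: measurableT_comp => //.
  exact: emeasurable_funB.
- by apply/disj_setPS => x [[Px _] [nPx _]].
congr (_ + _); apply: eq_integral => x /[!inE] -[Px _].
  have gf : g x <= f x := Px.
  by rewrite gee0_abs// sube_ge0// fg.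
have fg' : f x <= g x by apply/ltW; rewrite ltNge; exact/negP.
by rewrite fin_num_distrC// gee0_abs// sube_ge0// ff.
Qed.

Lemma integrable_ge0_le1 d (T : measurableType d) (R : realType)
    (mu : {measure set T -> \bar R}) (D : set T) (f : T -> \bar R) :
  measurable D -> mu D < +oo -> measurable_fun D f ->
  (forall x, D x -> 0 <= f x <= 1) -> mu.-integrable D f.
Proof.
move=> mD muD mf f01; apply/integrableP; split => //.
apply: le_lt_trans muD; rewrite -[leRHS]mul1e -integral_cst//.
apply: ge0_le_integral_nonmeasurable => x Dx; first exact: abse_ge0.
by have /andP[f0 f1] := f01 x Dx; rewrite gee0_abs.
Qed.

Section copula_kernels.
Variable R : realType.

Lemma lebesgue_measure01 : lebesgue_measure (`[0%R, 1%R] : set R) = 1.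
Proof. by rewrite lebesgue_measure_itv /= lte_fin ltr01 sube0. Qed.

Lemma int_cube_bounded n (f : n.-tuple R -> \bar R) (c : \bar R) :
  0 <= c -> (forall u, unit_cube u -> 0 <= f u <= c) -> 0 <= int_cube f <= c.
Proof.
elim: n f => [|n IH] f c0 hf /=; first by apply: hf => -[].
have hslice x : `[0%R, 1%R]%classic x ->
    0 <= int_cube (fun t => f (cons_tuple x t)) <= c.
  rewrite /= in_itv /= => /andP[x0 x1]; apply: IH => // t tc; apply: hf => i.
  by case: (unliftP ord0 i) => [j ->|->]; rewrite ?tnthS ?tnth0 ?x0 ?x1 ?tc.
apply/andP; split; first by apply: integral_ge0 => x /hslice /andP[].
apply: le_trans (_ : _ <= \int[lebesgue_measure]_(x in `[0%R, 1%R]) c) _.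
  by apply: ge0_le_integral_nonmeasurable => x /hslice /andP[].
by rewrite integral_cst//= lebesgue_measure01 mule1.
Qed.

Lemma measurable_box0 n (u : n.-tuple R) : measurable (box0 u).
Proof.
have -> : box0 u = \bigcap_(i in [set: 'I_n]) ((@tnth n R)^~ i @^-1` `[0%R, tnth u i]).
  by apply/seteqP; split => x /= h i; [move=> _; rewrite /= in_itv; exact: h|
    have := h i I; rewrite /= in_itv].
apply: fin_bigcap_measurable; first exact: finite_finset.
move=> i _; rewrite -[X in measurable X]setTI.
exact: (measurable_tnth i) measurableT _ (measurable_itv _).
Qed.

Lemma measurable_firsts n : measurable_fun [set: n.+1.-tuple R] (@firsts R n).
Proof.
apply/measurable_fun_tnthP => i.
rewrite (_ : _ \o _ = (@tnth _ R)^~ (widen_ord (leqnSn n) i)).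
  exact: measurable_tnth.
by apply/funext => x /=; rewrite tnth_mktuple.
Qed.

Lemma measurable_firsts_lastc n (B : set (n.-tuple R)) (A : set R) :
  measurable B -> measurable A ->
  measurable [set x : n.+1.-tuple R | B (firsts x) /\ A (lastc x)].
Proof.
move=> mB mA; apply: measurableI; rewrite -[X in measurable X]setTI.
  exact: measurable_firsts.
exact: (measurable_tnth ord_max).
Qed.

Lemma le_abse_TV d (mu1 mu2 : probability (d.-tuple R) R) (G : set (d.-tuple R)) :
  measurable G -> `|mu1 G - mu2 G| <= TV mu1 mu2.
Proof. by move=> mG; apply: ereal_sup_ubound; exists G. Qed.

Lemma TVC d (mu1 mu2 : probability (d.-tuple R) R) : TV mu1 mu2 = TV mu2 mu1.
Proof.
rewrite /TV; congr ereal_sup; apply/seteqP; split=> _ [G mG <-];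
  by exists G => //; rewrite fin_num_distrC ?fin_num_measure.
Qed.

Section kernel_difference.
Variables (n : nat) (mu1 mu2 : probability (n.+1.-tuple R) R).
Variables (K1 K2 : R.-pker R ~> n.-tuple R).
Hypotheses (hK1 : markov_kernel_of mu1 K1) (hK2 : markov_kernel_of mu2 K2).

Lemma integral_kernel_diff (A : set R) (B : set (n.-tuple R)) :
  measurable A -> measurable B ->
  \int[lebesgue_measure]_(v in A `&` `[0%R, 1%R]) (K1 v B - K2 v B) =
  mu1 [set x | B (firsts x) /\ A (lastc x)] - mu2 [set x | B (firsts x) /\ A (lastc x)].
Proof.
move=> mA mB; have mAI : measurable (A `&` `[0%R, 1%R]) by exact: measurableI.
have AIfin : lebesgue_measure (A `&` `[0%R, 1%R]) < +oo.
  apply: (@le_lt_trans _ _ (lebesgue_measure (`[0%R, 1%R] : set R))).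
    exact: measureIr.
  by rewrite lebesgue_measure01 ltry.
have intK (K : R.-pker R ~> n.-tuple R) :
    lebesgue_measure.-integrable (A `&` `[0%R, 1%R]) (fun v => K v B).
  apply: integrable_ge0_le1 => //; first exact: measurable_funS (measurable_kernel K B mB).
  by move=> v _; rewrite measure_ge0 pker_le1.
by rewrite -(hK1 mA mB) -(hK2 mA mB) integralB.
Qed.

Lemma integral_kernel_diff_le_TV (A : set R) (B : set (n.-tuple R)) :
  measurable A -> measurable B ->
  \int[lebesgue_measure]_(v in A `&` `[0%R, 1%R]) (K1 v B - K2 v B) <= TV mu1 mu2.
Proof.
move=> mA mB; rewrite integral_kernel_diff//.
apply: le_trans (lee_abs _) (le_abse_TV _ _ _); exact: measurable_firsts_lastc.
Qed.

End kernel_difference.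

Lemma kdist_le_TV n (mu1 mu2 : probability (n.+1.-tuple R) R)
    (K1 K2 : R.-pker R ~> n.-tuple R) (u : n.-tuple R) :
  markov_kernel_of mu1 K1 -> markov_kernel_of mu2 K2 ->
  kdist K1 K2 u <= 2%:E * TV mu1 mu2.
Proof.
move=> hK1 hK2; have mB := measurable_box0 u.
have mP : measurable [set v | K2 v (box0 u) <= K1 v (box0 u)].
  rewrite -[X in measurable X]setTI.
  exact: measurable_lee (measurable_kernel K2 _ mB) (measurable_kernel K1 _ mB).
rewrite /kdist integral_abse_sub_split//; last 4 first.
- exact: measurable_funS (measurable_kernel K1 _ mB).
- exact: measurable_funS (measurable_kernel K2 _ mB).
- by move=> v; exact: pker_fin_num.
- by move=> v; exact: pker_fin_num.
rewrite mule_natl mule2n; apply: leeD.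
  exact: integral_kernel_diff_le_TV.
by rewrite TVC; apply: integral_kernel_diff_le_TV => //; exact: measurableC.
Qed.

Lemma kdist_ge0 n (K1 K2 : R.-pker R ~> n.-tuple R) (u : n.-tuple R) :
  0 <= kdist K1 K2 u.
Proof. by apply: integral_ge0 => v _; exact: abse_ge0. Qed.

Lemma kdist_le_Dinf n (K1 K2 : R.-pker R ~> n.-tuple R) (u : n.-tuple R) :
  unit_cube u -> kdist K1 K2 u <= Dinf K1 K2.
Proof. by move=> uc; apply: ereal_sup_ubound; exists u. Qed.

Lemma Dinf_ge0 n (K1 K2 : R.-pker R ~> n.-tuple R) : 0 <= Dinf K1 K2.
Proof.
apply: le_trans (kdist_ge0 K1 K2 [tuple 0%R | _ < n]) (kdist_le_Dinf _ _ _).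
by move=> i; rewrite tnth_mktuple lexx ler01.
Qed.

Lemma D1_ge0_le_Dinf n (K1 K2 : R.-pker R ~> n.-tuple R) :
  0 <= D1 K1 K2 <= Dinf K1 K2.
Proof.
by apply: int_cube_bounded (Dinf_ge0 K1 K2) _ => u uc; rewrite kdist_ge0 kdist_le_Dinf.
Qed.

Lemma Dinf_le_TV n (mu1 mu2 : probability (n.+1.-tuple R) R)
    (K1 K2 : R.-pker R ~> n.-tuple R) :
  markov_kernel_of mu1 K1 -> markov_kernel_of mu2 K2 ->
  Dinf K1 K2 <= 2%:E * TV mu1 mu2.
Proof. by move=> hK1 hK2; apply: ge_ereal_sup => _ [u _ <-]; exact: kdist_le_TV. Qed.

End copula_kernels.

Local Close Scope ereal_scope.

Theorem theorem2p3 (R : realType) (n : nat) (hn : (1 <= n)%N) :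
  (forall (C1 C2 : n.+1.-tuple R -> R)
          (mu1 mu2 : probability (n.+1.-tuple R) R)
          (K1 K2 : R.-pker R ~> n.-tuple R),
      is_copula C1 -> is_copula C2 ->
      copula_measure C1 mu1 -> copula_measure C2 mu2 ->
      markov_kernel_of mu1 K1 -> markov_kernel_of mu2 K2 ->
      (D1 K1 K2 <= Dinf K1 K2)%E /\ (Dinf K1 K2 <= 2%:E * TV mu1 mu2)%E) /\
  (forall (Cs : nat -> n.+1.-tuple R -> R) (C : n.+1.-tuple R -> R)
          (mus : nat -> probability (n.+1.-tuple R) R)
          (mu : probability (n.+1.-tuple R) R)
          (Ks : nat -> R.-pker R ~> n.-tuple R) (K : R.-pker R ~> n.-tuple R),
      (forall k, is_copula (Cs k)) -> is_copula C ->
      (forall k, copula_measure (Cs k) (mus k)) -> copula_measure C mu ->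
      (forall k, markov_kernel_of (mus k) (Ks k)) -> markov_kernel_of mu K ->
      (fun k => TV (mus k) mu) @ \oo --> 0%E ->
      (fun k => D1 (Ks k) K) @ \oo --> 0%E /\
      (fun k => Dinf (Ks k) K) @ \oo --> 0%E).
Proof.
split=> [C1 C2 mu1 mu2 K1 K2 _ _ _ _ hK1 hK2|Cs C mus mu Ks K _ _ _ _ hKs hK TV0].
  by split; [case/andP: (D1_ge0_le_Dinf K1 K2) | exact: Dinf_le_TV].
have TV0' : (fun k => 2%:E * TV (mus k) mu)%E @ \oo --> 0%E.
  by rewrite -(mule0 2%:E); apply: cvgeZl.
have Dinf0 : (fun k => Dinf (Ks k) K) @ \oo --> 0%E.
  apply: (squeeze_cvge _ (cvg_cst 0%E) TV0').
  by apply: nearW => k; rewrite Dinf_ge0 Dinf_le_TV.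
split=> //; apply: (squeeze_cvge _ (cvg_cst 0%E) Dinf0).
by apply: nearW => k; exact: D1_ge0_le_Dinf.
Qed.
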